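(* Let $L\ge2$ and let $\mathcal H_1^L$ be the complete 1-constituent CCRN of length $L$ and order two. Then its number of complexes is $|\mathcal C_L|=\frac{(L+1)(L+2)}{2}-4$, its number of linkage classes is $\ell=2L-3$, the dimension of its stoichiometric subspace is $s=L-1$, and its deficiency is $\delta=|\mathcal C_L|-\ell-s=\frac{(L-1)(L-2)}{2}$.
   Context: The complete 1-constituent CCRN of length $L$ and order two has species set $\{\bar1,\dots,\bar L\}$ (cluster $\bar n$ has size $n$). A complex is a multiset of one or two species, written $\bar a$ or $\bar a+\bar b$, with size $a$, resp. $a+b$. The reaction set consists of all reactions $y\to y'$ between two distinct complexes $y\ne y'$ of width at most two having the same size (i.e. all $\bar a+\bar b\to\bar c+\bar d$ and $\bar a+\bar b\rightleftharpoons\bar c$ etc. with $a+b=c+d$, resp. $a+b=c$), so every reaction is reversible. The complex set $\mathcal C_L$ consists of the complexes that occur as input or output of at least one reaction. Linkage classes are the connected components of the (undirected) graph with vertex set $\mathcal C_L$ and an edge for each reaction. Each reaction $y\to y'$ has reaction vector $y'-y\in\mathbb Z^L$ (counting species multiplicities), the stoichiometric subspace is the span of all reaction vectors, $s$ is its dimension, and the deficiency is $\delta=|\mathcal C_L|-\ell-s$. *)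

From HB Require Import structures.
From mathcomp Require Import all_boot all_order all_algebra.
Set Implicit Arguments. Unset Strict Implicit. Unset Printing Implicit Defensive.
Import Order.TTheory GRing.Theory Num.Theory.

(* Species of the complete 1-constituent CCRN of length L: the index
   i : 'I_L stands for the cluster \bar{i+1}, of size i+1.
   A (candidate) complex is a multiset of species, encoded by its
   multiplicity vector y : 'I_L -> {0,1,2}. *)
Definition cplx (L : nat) := {ffun 'I_L -> 'I_3}.

Definition width L (y : cplx L) : nat := \sum_(i < L) (y i : nat).

Definition csize L (y : cplx L) : nat := \sum_(i < L) (i.+1 * y i)%N.

Definition admissible L (y : cplx L) : bool := (0 < width y <= 2)%N.

Definition reaction L (y y' : cplx L) : bool :=
  [&& admissible y, admissible y', y != y' & csize y == csize y'].

Definition complexes L : {set cplx L} :=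
  [set y | [exists y', reaction y y' || reaction y' y]].

Definition reaction_graph L : rel (cplx L) :=
  fun y y' => reaction y y' || reaction y' y.

Definition linkage_classes L : {set {set cplx L}} :=
  [set [set z in complexes L | connect (@reaction_graph L) y z]
     | y in complexes L].

Definition n_linkage L : nat := #|linkage_classes L|.

Definition reaction_vector L (y y' : cplx L) : 'rV[rat]_L :=
  \row_i (((y' i : nat)%:R - (y i : nat)%:R) : rat)%R.

Definition stoich_subspace L :=
  (\sum_(p : cplx L * cplx L | reaction p.1 p.2)
      <<reaction_vector p.1 p.2>>)%MS.

Definition stoich_dim L : nat := \rank (stoich_subspace L).

Definition deficiency L : int :=
  (#|complexes L|%:Z - (n_linkage L)%:Z - (stoich_dim L)%:Z)%R.

From HB Require Import structures.
From mathcomp Require Import all_boot all_order all_algebra.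
From mathcomp Require Import zify ring.
Set Implicit Arguments. Unset Strict Implicit. Unset Printing Implicit Defensive.
Import GRing.Theory Num.Theory.

(* Every admissible complex (width one or two) is \bar a + \bar b with
   0 <= a <= b <= L, b > 0, where the slot 0 means "absent"; the pair (a, b)
   is recovered from the size a + b and the quadratic statistic a^2 + b^2.
   Two such complexes react iff they differ and have equal size, so the
   complex set consists of the sorted pairs with 2 <= a + b <= 2L - 2 (the
   sizes 1 and 2L each carry a single complex).  Counting sorted pairs and
   removing the four extreme ones gives |C| = (L+1)(L+2)/2 - 4.  Reactions
   preserve size, and equal-size complexes react directly, so the linkage
   classes are the size classes for sizes 2, ..., 2L - 2: there are 2L - 3.
   Reaction vectors are orthogonal to the size weights (1, ..., L), so
   s <= L - 1; conversely the reaction vectors of \bar 1 + \bar n -> \bar (n+1)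
   together with the unit vector of \bar 1 span everything, so s >= L - 1.  The deficiency then
   follows by arithmetic. *)

(* The complex \bar a + \bar b; the index 0 stands for an empty slot, so that
   [pair_cplx L 0 b] is the one-species complex \bar b. *)
Definition pair_cplx L (a b : nat) : cplx L :=
  [ffun k : 'I_L => inord ((k.+1 == a) + (k.+1 == b))].

Lemma pair_cplxE L a b (k : 'I_L) :
  (pair_cplx L a b k : nat) = (k.+1 == a) + (k.+1 == b).
Proof. by rewrite ffunE inordK //; case: (_ == a); case: (_ == b). Qed.

Lemma pair_cplxC L a b : pair_cplx L a b = pair_cplx L b a.
Proof. by apply/ffunP => k; apply/val_inj; rewrite /= !pair_cplxE addnC. Qed.

Lemma pair_cplx_ext L (y : cplx L) a b :
  (forall k : 'I_L, (y k : nat) = (k.+1 == a) + (k.+1 == b)) ->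
  y = pair_cplx L a b.
Proof. by move=> Ey; apply/ffunP => k; apply/val_inj; rewrite /= pair_cplxE. Qed.

Lemma sum_slot L (f : nat -> nat) a : a <= L -> f 0 = 0 ->
  \sum_(k < L) f k.+1 * (k.+1 == a) = f a.
Proof.
case: a => [|a] ha f0; first by rewrite big1 // => k _; rewrite muln0.
rewrite (bigD1 (Ordinal ha)) //= eqxx muln1 big1 ?addn0 // => k.
by rewrite -val_eqE /= eqSS => /negbTE ->; rewrite muln0.
Qed.

Lemma sum_pair_cplx L (f : nat -> nat) a b : a <= L -> b <= L -> f 0 = 0 ->
  \sum_(k < L) f k.+1 * pair_cplx L a b k = f a + f b.
Proof.
move=> ha hb f0; rewrite -(sum_slot ha f0) -(sum_slot hb f0) -big_split /=.
by apply: eq_bigr => k _; rewrite pair_cplxE mulnDr.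
Qed.

Lemma width_pair_cplx L a b : a <= L -> b <= L ->
  width (pair_cplx L a b) = (0 < a) + (0 < b).
Proof.
move=> ha hb; rewrite -(sum_pair_cplx (f := fun x => (0 < x) : nat) ha hb) //.
by apply: eq_bigr => k _; rewrite mul1n.
Qed.

Lemma csize_pair_cplx L a b : a <= L -> b <= L -> csize (pair_cplx L a b) = a + b.
Proof. by move=> ha hb; rewrite -(sum_pair_cplx (f := id) ha hb). Qed.

(* A sorted pair of slots is recovered from the sum and the sum of squares. *)
Lemma pair_cplx_inj L a b c d : a <= b -> b <= L -> c <= d -> d <= L ->
  pair_cplx L a b = pair_cplx L c d -> a = c /\ b = d.
Proof.
move=> hab hb hcd hd E.
have sq x y : x <= L -> y <= L ->
    \sum_(k < L) k.+1 * k.+1 * pair_cplx L x y k = x * x + y * y.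
  by move=> hx hy; rewrite (sum_pair_cplx (f := fun z => z * z) hx hy).
have sq_ab := sq a b (leq_trans hab hb) hb; have sq_cd := sq c d (leq_trans hcd hd) hd.
have sz_ab := csize_pair_cplx (leq_trans hab hb) hb.
have sz_cd := csize_pair_cplx (leq_trans hcd hd) hd.
rewrite E in sq_ab sz_ab; rewrite sq_ab in sq_cd; rewrite sz_ab in sz_cd; nia.
Qed.

Lemma admissible_pair_cplx L a b : a <= L -> b <= L -> 0 < b ->
  admissible (pair_cplx L a b).
Proof. by move=> ha hb b0; rewrite /admissible width_pair_cplx //; lia. Qed.

Lemma sum_nat_le1P (I : finType) (P : pred I) (f : I -> nat) :
  \sum_(i | P i) f i <= 1 ->
  (forall i, P i -> f i = 0) \/
  exists2 j, P j & forall i, P i -> f i = (i == j).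
Proof.
case: (pickP [pred i | P i & 0 < f i]) => [j /andP[Pj fj] | none] hsum.
  right; exists j => // i Pi; move: hsum; rewrite (bigD1 j) //=.
  case: (eqVneq i j) => [-> | ne] hsum; first by lia.
  have /eqP : \sum_(k | P k && (k != j)) f k = 0 by lia.
  by rewrite sum_nat_eq0 => /forallP/(_ i); rewrite Pi ne => /eqP.
left => i Pi; have := none i; rewrite /= Pi /=; lia.
Qed.

(* Classification of admissible complexes as \bar a + \bar b, slots unsorted:
   pick a species present, then the remaining width is at most one. *)
Lemma admissible_pair_cplx_unsorted L (y : cplx L) : admissible y ->
  exists a b, [/\ a <= L, b <= L, 0 < b & y = pair_cplx L a b].
Proof.
rewrite /admissible /width => /andP[wpos wle2].
have [i yi] : exists i, 0 < (y i : nat).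
  case: (pickP [pred i | 0 < (y i : nat)]) => [i ? | none]; first by exists i.
  by move: wpos; rewrite big1 // => i _; have := none i; rewrite /=; lia.
have eqS (k j : 'I_L) : (k.+1 == j.+1) = (k == j) by [].
have yi3 : (y i : nat) < 3 := ltn_ord _.
have split_i : \sum_(k < L) (y k : nat) = y i + \sum_(k < L | k != i) (y k : nat).
  exact: (bigD1 i).
have rest_le1 : \sum_(k < L | k != i) (y k : nat) <= 1 by lia.
have [rest0 | [j ji yj]] := sum_nat_le1P rest_le1.
- have [y1 | y2] : (y i : nat) = 1 \/ (y i : nat) = 2 by lia.
  + exists 0, i.+1; split => //; apply: pair_cplx_ext => k.
    case: (eqVneq k i) => [-> | ne]; first by rewrite eqS eqxx y1.
    by rewrite eqS (negbTE ne) rest0.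
  + exists i.+1, i.+1; split => //; apply: pair_cplx_ext => k.
    case: (eqVneq k i) => [-> | ne]; first by rewrite eqS eqxx y2.
    by rewrite eqS (negbTE ne) rest0.
- have ij : (i == j) = false by rewrite eq_sym; exact: negbTE.
  have restE : \sum_(k < L | k != i) (y k : nat) = 1.
    by rewrite (bigD1 j) //= (yj j ji) eqxx big1 // => k /andP[ki kj]; rewrite yj // (negbTE kj).
  exists i.+1, j.+1; split => //; apply: pair_cplx_ext => k.
  rewrite !eqS; case: (eqVneq k i) => [-> | ne]; first by rewrite ij; lia.
  by rewrite yj.
Qed.

Lemma admissibleP L (y : cplx L) : admissible y ->
  exists a b, [/\ a <= b, b <= L, 0 < b & y = pair_cplx L a b].
Proof.
move/admissible_pair_cplx_unsorted => [a [b [ha hb b0 ->]]].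
case: (leqP a b) => hab; first by exists a, b.
by exists b, a; rewrite pair_cplxC; split => //; lia.
Qed.

Lemma reaction_size_bounds L (y y' : cplx L) : reaction y y' ->
  exists a b, [/\ a <= b, b <= L, 2 <= a + b, a + b <= 2 * L - 2
                & y = pair_cplx L a b].
Proof.
case/and4P => /admissibleP[a [b [hab hb b0 ->]]] /admissibleP[c [d [hcd hd d0 ->]]].
move=> ne /eqP; rewrite !csize_pair_cplx; try lia => E.
have {}ne : ~ (a = c /\ b = d) by move: ne => /[swap] -[-> ->]; rewrite eqxx.
by exists a, b; split => //; lia.
Qed.

Lemma other_pair L a b : a <= b -> b <= L -> 2 <= a + b -> a + b <= 2 * L - 2 ->
  exists c d, [/\ c <= d, d <= L, 0 < d, c + d = a + b & c != a].
Proof.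
move=> hab hb h2 h2L.
case: (posnP a) => [a0 | apos]; first by exists 1, (b - 1); split; lia.
case: (ltnP b L) => hbL; first by exists a.-1, b.+1; split; lia.
by exists a.+1, b.-1; split; lia.
Qed.

Lemma in_complexesP L (y : cplx L) : 2 <= L ->
  y \in complexes L <->
  exists a b, [/\ a <= b, b <= L, 2 <= a + b, a + b <= 2 * L - 2
                & y = pair_cplx L a b].
Proof.
move=> hL; split.
  rewrite inE => /existsP[y' /orP[] r]; first exact: reaction_size_bounds r.
  have [a [b [hab hb h2 h2L Ey']]] := reaction_size_bounds r.
  case/and4P: r => _ /admissibleP[c [d [hcd hd d0 ->]]] ne /eqP.
  rewrite Ey' !csize_pair_cplx; try lia => E.
  by exists c, d; split => //; lia.
move=> [a [b [hab hb h2 h2L ->]]].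
have [c [d [hcd hd d0 E ca]]] := other_pair hab hb h2 h2L.
rewrite inE; apply/existsP; exists (pair_cplx L c d); apply/orP; left.
apply/and4P; split; [apply: admissible_pair_cplx; lia | apply: admissible_pair_cplx; lia | |].
  apply/negP => /eqP E'.
  have [ac _] := pair_cplx_inj hab hb hcd hd E'.
  by rewrite ac eqxx in ca.
by rewrite !csize_pair_cplx //; lia.
Qed.

Definition sorted_pairs n : {set 'I_n * 'I_n} := [set p : 'I_n * 'I_n | p.1 <= p.2].

Lemma sum_leq_ord n m : \sum_(a < n) (a <= m : nat) = minn n m.+1.
Proof. by elim: n => [|n IH]; rewrite ?big_ord0 // big_ord_recr /= IH; case: leqP; lia. Qed.

Lemma sum_succ_ord n : (\sum_(b < n) b.+1) * 2 = n * n.+1.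
Proof. by elim: n => [|n IH]; rewrite ?big_ord0 // big_ord_recr /= mulnDl IH; lia. Qed.

Lemma card_sorted_pairs n : #|sorted_pairs n| * 2 = n * n.+1.
Proof.
have -> : #|sorted_pairs n| = \sum_(a < n) \sum_(b < n) (a <= b : nat).
  rewrite -sum1_card pair_big big_mkcond /=.
  by apply: eq_bigr => p _; rewrite inE; case: (_ <= _).
rewrite exchange_big -sum_succ_ord; congr (_ * 2); apply: eq_bigr => b _.
by rewrite sum_leq_ord; have := ltn_ord b; lia.
Qed.

Definition complex_pairs L : {set 'I_L.+1 * 'I_L.+1} :=
  [set p in sorted_pairs L.+1 | 2 <= (p.1 : nat) + p.2 <= 2 * L - 2].

Lemma complexesE L : 2 <= L ->
  complexes L = [set pair_cplx L p.1 p.2 | p : 'I_L.+1 * 'I_L.+1 in complex_pairs L].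
Proof.
move=> hL; apply/setP => y; apply/idP/imsetP => [|[p]].
  move=> /(in_complexesP y hL) [a [b [hab hb h2 h2L ->]]].
  exists (inord a, inord b); last by rewrite /= !inordK //; lia.
  by rewrite !inE /= !inordK; try lia; apply/andP; split; lia.
move=> pP ->; apply/(in_complexesP _ hL); move: pP; rewrite !inE => /andP[hp hsz].
have := ltn_ord p.2; exists p.1, p.2; split => //; lia.
Qed.

Lemma card_complexes_pairs L : 2 <= L -> #|complexes L| = #|complex_pairs L|.
Proof.
move=> hL; rewrite complexesE // card_in_imset // => p q.
rewrite !inE => /andP[hp _] /andP[hq _] /(pair_cplx_inj hp _ hq) [].
- by rewrite -ltnS.
- by rewrite -ltnS.
by case: p q {hp hq} => [p1 p2] [q1 q2] /= /val_inj -> /val_inj ->.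
Qed.

(* Exactly four sorted pairs are excluded: sizes 0, 1, 2L - 1 and 2L. *)
Lemma card_complex_pairs L : 2 <= L -> #|complex_pairs L| + 4 = #|sorted_pairs L.+1|.
Proof.
move=> hL; pose pair_ix a b : 'I_L.+1 * 'I_L.+1 := (inord a, inord b).
have pair_ixE p a b : a <= L -> b <= L ->
    (p == pair_ix a b) = ((p.1 : nat) == a) && ((p.2 : nat) == b).
  move=> ha hb; case: p => p1 p2.
  by rewrite xpair_eqE /= -!(inj_eq val_inj) /= !inordK.
set excluded := [:: pair_ix 0 0; pair_ix 0 1; pair_ix L.-1 L; pair_ix L L].
have -> : 4 = #|[set p in excluded]|.
  rewrite cardsE; apply/esym/card_uniqP.
  by rewrite /excluded /= !inE !negb_or !pair_ixE /= ?inordK; lia.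
rewrite -(cardsID (complex_pairs L) (sorted_pairs L.+1)).
have -> : sorted_pairs L.+1 :&: complex_pairs L = complex_pairs L.
  by apply/setIidPr/subsetP => p; rewrite inE => /andP[].
congr (_ + _); apply: eq_card => -[p1 p2]; rewrite !inE /excluded !pair_ixE; try lia.
by have := ltn_ord p1; have := ltn_ord p2; move: (p1 : nat) (p2 : nat) => /=; lia.
Qed.

Lemma card_complexes L : 2 <= L -> #|complexes L| * 2 + 8 = (L + 1) * (L + 2).
Proof.
move=> hL; have := card_sorted_pairs L.+1; rewrite -card_complex_pairs //.
rewrite -card_complexes_pairs //; lia.
Qed.

(* Reactions preserve size, hence so does connectedness in the reaction graph. *)
Lemma connect_csize L (y z : cplx L) :
  connect (@reaction_graph L) y z -> csize y = csize z.
Proof.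
move/connectP => [p pth ->] {z}; elim: p y pth => //= x p IH y /andP[e pth].
rewrite -(IH x pth); move: e; rewrite /reaction_graph /reaction.
by case/orP => /and4P[_ _ _ /eqP].
Qed.

Lemma complexes_admissible L (y : cplx L) : y \in complexes L -> admissible y.
Proof. by rewrite inE => /existsP[y' /orP[] /and4P[]]. Qed.

Definition size_class L n : {set cplx L} := [set z in complexes L | csize z == n].

(* Conversely two distinct complexes of equal size react, so linkage classes
   are exactly the size classes. *)
Lemma linkage_class_size L (y : cplx L) : y \in complexes L ->
  [set z in complexes L | connect (@reaction_graph L) y z] = size_class L (csize y).
Proof.
move=> yC; apply/setP => z; rewrite /size_class.
case zC: (z \in complexes L); rewrite 2!in_set zC //=.
apply/idP/eqP => [/connect_csize -> // | Ez].
case: (eqVneq y z) => [-> | ne]; first exact: connect0.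
apply: connect1; rewrite /reaction_graph /reaction ne Ez eqxx.
by rewrite !complexes_admissible.
Qed.

Lemma csize_complexes L (y : cplx L) : 2 <= L -> y \in complexes L ->
  2 <= csize y <= 2 * L - 2.
Proof.
by move=> hL /(in_complexesP y hL)[a [b [hab hb h2 h2L ->]]]; rewrite csize_pair_cplx; lia.
Qed.

Lemma size_class_inhabited L n : 2 <= L -> 2 <= n <= 2 * L - 2 ->
  exists2 y, y \in complexes L & csize y = n.
Proof.
move=> hL hn; exists (pair_cplx L (n - minn n L) (minn n L)).
  by apply/(in_complexesP _ hL); exists (n - minn n L), (minn n L); split => //; lia.
by rewrite csize_pair_cplx; lia.
Qed.

Lemma n_linkageE L : 2 <= L -> n_linkage L = 2 * L - 3.
Proof.
move=> hL; rewrite /n_linkage; pose cls (n : 'I_(2 * L - 3)) := size_class L n.+2.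
have inh (n : 'I_(2 * L - 3)) : exists2 y, y \in complexes L & csize y = n.+2.
  by apply: size_class_inhabited; have := ltn_ord n; lia.
have -> : linkage_classes L = [set cls n | n in 'I_(2 * L - 3)].
  apply/setP => C; apply/imsetP/imsetP => [[y yC ->] | [n _ ->]].
    have hy := csize_complexes hL yC.
    have lt : csize y - 2 < 2 * L - 3 by lia.
    by exists (Ordinal lt); rewrite // linkage_class_size // /cls /=; congr size_class; lia.
  by have [y yC Ey] := inh n; exists y; rewrite // linkage_class_size // Ey.
rewrite card_imset ?cardsT ?card_ord // => m n Emn; apply/val_inj.
have [y yC Ey] := inh m.
have : y \in cls n by rewrite -Emn inE yC Ey eqxx.
by rewrite inE Ey => /andP[_ /eqP[]].
Qed.

Local Open Scope ring_scope.

Definition size_weights L : 'cV[rat]_L := \col_(i < L) (i.+1)%:R.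

Lemma reaction_vector_ker L (y y' : cplx L) : reaction y y' ->
  (reaction_vector y y' <= kermx (size_weights L))%MS.
Proof.
case/and4P => _ _ _ /eqP Esz; rewrite sub_kermx; apply/eqP/matrixP => i j.
have csizeE (x : cplx L) : (\sum_(k < L) (x k : nat)%:R * (k.+1)%:R = (csize x)%:R :> rat).
  by rewrite /csize natr_sum; apply: eq_bigr => k _; rewrite -natrM mulnC.
rewrite !mxE; under eq_bigr => k _ do rewrite !mxE mulrBl.
by rewrite sumrB !csizeE Esz subrr.
Qed.

Lemma stoich_dim_le L : (stoich_dim L.+1 <= L)%N.
Proof.
have sub : (stoich_subspace L.+1 <= kermx (size_weights L.+1))%MS.
  by apply/sumsmx_subP => p Rp; rewrite genmxE; exact: reaction_vector_ker.
have nz : (size_weights L.+1)^T != 0.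
  by apply/eqP => /matrixP /(_ 0 0); rewrite !mxE => /eqP; rewrite pnatr_eq0.
move: (mxrankS sub); rewrite mxrank_ker -[\rank (size_weights _)]mxrank_tr rank_rV nz.
by rewrite /stoich_dim subn1.
Qed.

Definition unit_row L (i : 'I_L) : 'rV[rat]_L := delta_mx 0 i.

Lemma reaction_vector_chain L n (hn : (n.+1 < L.+1)%N) :
  reaction_vector (pair_cplx L.+1 1 n.+1) (pair_cplx L.+1 0 n.+2) =
  unit_row (Ordinal hn) - unit_row ord0 - unit_row (Ordinal (ltnW hn)).
Proof.
apply/rowP => k; rewrite !mxE !pair_cplxE /= -!val_eqE /= !eqSS.
by rewrite !natrD; ring.
Qed.

(* Adding the single vector e_0 (species \bar 1) to the stoichiometric subspace yields every
   unit vector e_n, by induction along the chain reactions above. *)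
Lemma unit_vector_in_span L n (hn : (n < L.+1)%N) :
  (unit_row (Ordinal hn) <= stoich_subspace L.+1 + unit_row ord0)%MS.
Proof.
elim: n hn => [|n IH] hn.
  by rewrite (_ : Ordinal hn = ord0); [exact: addsmxSr | exact: val_inj].
have chain : reaction (pair_cplx L.+1 1 n.+1) (pair_cplx L.+1 0 n.+2).
  apply/and4P; split; try (apply: admissible_pair_cplx; lia).
    apply/negP => /eqP E.
    by have [] := @pair_cplx_inj L.+1 1 n.+1 0 n.+2 ltac:(lia) ltac:(lia) ltac:(lia) ltac:(lia) E.
  by rewrite !csize_pair_cplx //; lia.
have -> : unit_row (Ordinal hn) =
    reaction_vector (pair_cplx L.+1 1 n.+1) (pair_cplx L.+1 0 n.+2)
    + unit_row (Ordinal (ltnW hn)) + unit_row ord0.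
  by rewrite reaction_vector_chain !subrK.
rewrite 2?addmx_sub ?IH ?addsmxSr //.
apply: submx_trans (addsmxSl _ _) ; apply: (sumsmx_sup (_, _) chain).
by rewrite genmxE.
Qed.

Lemma stoich_dim_ge L : (L <= stoich_dim L.+1)%N.
Proof.
have full : ((1%:M : 'M[rat]_L.+1) <= stoich_subspace L.+1 + unit_row ord0)%MS.
  apply/row_subP => i; rewrite row1.
  by rewrite (_ : i = Ordinal (ltn_ord i)) //; [exact: unit_vector_in_span | exact: val_inj].
have := leq_trans (mxrankS full) (mxrank_adds_leqif _ _).1.
have := rank_leq_row (unit_row (ord0 : 'I_L.+1)).
by rewrite mxrank1 /stoich_dim; lia.
Qed.

Lemma stoich_dimE L : (2 <= L)%N -> stoich_dim L = (L - 1)%N.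
Proof.
case: L => // L _; have := stoich_dim_le L; have := stoich_dim_ge L; lia.
Qed.

Local Close Scope ring_scope.

Unset Implicit Arguments.

Theorem mainTheorem13 (L : nat) (hL : (2 <= L)%N) :
  [/\ #|complexes L| = ((L + 1) * (L + 2) %/ 2 - 4)%N,
      n_linkage L = (2 * L - 3)%N,
      stoich_dim L = (L - 1)%N
    & deficiency L = (((L - 1) * (L - 2)) %/ 2)%N%:Z%R].
Proof.
have card2 := card_complexes hL.
have cardC : #|complexes L| = (L + 1) * (L + 2) %/ 2 - 4 by rewrite -card2; lia.
have defic : (L - 1) * (L - 2) %/ 2 = #|complexes L| - (2 * L - 3) - (L - 1).
  by nia.
split; [exact: cardC | exact: n_linkageE | exact: stoich_dimE |].
by rewrite /deficiency n_linkageE // stoich_dimE // defic; lia.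
Qed.
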